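(* Consider the following maps $\mathbf f_c:\mathbb{R}^2\to\mathbb{R}^2$ (with real parameter $c$ where present), together with the integer $n$: fold: $\mathbf f(x_1,x_2)=(x_1,\,x_2^2)$, $n=2$; cusp: $\mathbf f(x_1,x_2)=(x_1,\,x_1x_2+x_2^3)$, $n=3$; swallowtail: $\mathbf f_c(x_1,x_2)=(x_1x_2+cx_1^2+x_1^4,\,x_2)$, $n=4$; elliptic umbilic: $\mathbf f_c(x_1,x_2)=(3x_2^2-3x_1^2-2cx_1,\,6x_1x_2-2cx_2)$, $n=4$; hyperbolic umbilic: $\mathbf f_c(x_1,x_2)=(-3x_1^2-cx_2,\,-3x_2^2-cx_1)$, $n=4$. For each of these, if $\mathbf s\in\mathbb{R}^2$ has exactly $n$ preimages $\mathbf x_1,\dots,\mathbf x_n$ under $\mathbf f_c$ and $\det[\mathrm{Jac}\,\mathbf f_c](\mathbf x_i)\neq0$ for each $i$, then $\sum_{i=1}^n\mathfrak M_i=0$, where $\mathfrak M_i=1/\det[\mathrm{Jac}\,\mathbf f_c](\mathbf x_i)$.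
   Context: These maps are the universal local forms of generic maps between planes (induced by Lagrangian generating families) near caustics of codimension at most 3. $\mathfrak M_i$ is the signed magnification of the lensed image $\mathbf x_i$; equivalently, $\mathfrak M_i$ is the reciprocal of the Gaussian curvature of the graph of the generating function at the corresponding critical point. The set of $\mathbf s$ with exactly $n$ nondegenerate preimages is the $n$-image region. *)

From Stdlib Require Import Reals Lra List.
Open Scope R_scope.

Definition R2 := (R * R)%type.

Definition fold_map (x : R2) : R2 := (fst x, (snd x) ^ 2).
Definition cusp_map (x : R2) : R2 :=
  (fst x, fst x * snd x + (snd x) ^ 3).
Definition swallowtail_map (c : R) (x : R2) : R2 :=
  (fst x * snd x + c * (fst x) ^ 2 + (fst x) ^ 4, snd x).
Definition elliptic_umbilic_map (c : R) (x : R2) : R2 :=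
  (3 * (snd x) ^ 2 - 3 * (fst x) ^ 2 - 2 * c * fst x,
   6 * fst x * snd x - 2 * c * snd x).
Definition hyperbolic_umbilic_map (c : R) (x : R2) : R2 :=
  (- 3 * (fst x) ^ 2 - c * snd x, - 3 * (snd x) ^ 2 - c * fst x).

Definition is_jac_det (f : R2 -> R2) (x : R2) (d : R) : Prop :=
  exists a11 a12 a21 a22 : R,
    derivable_pt_lim (fun t => fst (f (t, snd x))) (fst x) a11 /\
    derivable_pt_lim (fun t => fst (f (fst x, t))) (snd x) a12 /\
    derivable_pt_lim (fun t => snd (f (t, snd x))) (fst x) a21 /\
    derivable_pt_lim (fun t => snd (f (fst x, t))) (snd x) a22 /\
    d = a11 * a22 - a12 * a21.

Definition magnification_sum_zero (f : R2 -> R2) (n : nat) : Prop :=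
  forall (J : R2 -> R), (forall x, is_jac_det f x (J x)) ->
  forall (s : R2) (xs : list R2),
    length xs = n ->
    NoDup xs ->
    (forall x, f x = s <-> In x xs) ->
    (forall x, In x xs -> J x <> 0) ->
    fold_right Rplus 0 (map (fun x => / J x) xs) = 0.

From Stdlib Require Import Reals Lra List.
From Coquelicot Require Import Coquelicot.
Open Scope R_scope.

(* Away from degenerate fibers, the preimages of s are parametrised by the n
   distinct roots r_i of a polynomial P of degree n in one coordinate, and the
   inverse Jacobian there is g(r_i) / P'(r_i) for a polynomial g of degree at
   most n - 2.  Since P'(r_i) = k prod_(j <> i) (r_i - r_j), the sum
   of the g(r_i) / P'(r_i) vanishes by partial fractions.  On the degenerate
   fibers (s2 = 0 for the elliptic umbilic, c = 0 for the hyperbolic one) the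
   four preimages come in two pairs whose magnifications cancel directly. *)

Lemma Rmult_eq0_reg_l a b : a <> 0 -> a * b = 0 -> b = 0.
Proof. intros Ha Hab; destruct (Rmult_integral _ _ Hab); [contradiction | assumption]. Qed.

Lemma linear_eq0 e1 e0 r1 r2 :
  r1 <> r2 -> e1 * r1 + e0 = 0 -> e1 * r2 + e0 = 0 -> e1 = 0 /\ e0 = 0.
Proof.
  intros d12 h1 h2.
  assert (E1 : e1 = 0).
  { apply (Rmult_eq0_reg_l (r1 - r2)); [now apply Rminus_eq_contra | nra]. }
  split; [exact E1 | subst; lra].
Qed.

Lemma quadratic_eq0 e2 e1 e0 r1 r2 r3 :
  r1 <> r2 -> r1 <> r3 -> r2 <> r3 ->
  e2 * r1 ^ 2 + e1 * r1 + e0 = 0 -> e2 * r2 ^ 2 + e1 * r2 + e0 = 0 ->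
  e2 * r3 ^ 2 + e1 * r3 + e0 = 0 ->
  e2 = 0 /\ e1 = 0 /\ e0 = 0.
Proof.
  intros d12 d13 d23 h1 h2 h3.
  assert (quotient : forall t, r1 <> t -> e2 * t ^ 2 + e1 * t + e0 = 0 ->
            e2 * t + (e2 * r1 + e1) = 0).
  { intros t dt ht. apply (Rmult_eq0_reg_l (t - r1)).
    - apply Rminus_eq_contra; congruence.
    - nra. }
  destruct (linear_eq0 _ _ _ _ d23 (quotient _ d12 h2) (quotient _ d13 h3)) as [E2 E1].
  subst e2; assert (e1 = 0) by lra; subst e1; repeat split; lra.
Qed.

Lemma cubic_eq0 e3 e2 e1 e0 r1 r2 r3 r4 :
  r1 <> r2 -> r1 <> r3 -> r1 <> r4 -> r2 <> r3 -> r2 <> r4 -> r3 <> r4 ->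
  e3 * r1 ^ 3 + e2 * r1 ^ 2 + e1 * r1 + e0 = 0 ->
  e3 * r2 ^ 3 + e2 * r2 ^ 2 + e1 * r2 + e0 = 0 ->
  e3 * r3 ^ 3 + e2 * r3 ^ 2 + e1 * r3 + e0 = 0 ->
  e3 * r4 ^ 3 + e2 * r4 ^ 2 + e1 * r4 + e0 = 0 ->
  e3 = 0 /\ e2 = 0 /\ e1 = 0 /\ e0 = 0.
Proof.
  intros d12 d13 d14 d23 d24 d34 h1 h2 h3 h4.
  assert (quotient : forall t, r1 <> t -> e3 * t ^ 3 + e2 * t ^ 2 + e1 * t + e0 = 0 ->
            e3 * t ^ 2 + (e3 * r1 + e2) * t + (e3 * r1 ^ 2 + e2 * r1 + e1) = 0).
  { intros t dt ht. apply (Rmult_eq0_reg_l (t - r1)).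
    - apply Rminus_eq_contra; congruence.
    - nra. }
  destruct (quadratic_eq0 _ _ _ _ _ _ d23 d24 d34
              (quotient _ d12 h2) (quotient _ d13 h3) (quotient _ d14 h4)) as (E3 & E2 & E1).
  subst e3; assert (e2 = 0) by lra; subst e2; assert (e1 = 0) by lra; subst e1.
  repeat split; lra.
Qed.

Definition cubic k a b d t := k * t ^ 3 + a * t ^ 2 + b * t + d.
Definition cubic_deriv k a b t := 3 * k * t ^ 2 + 2 * a * t + b.
Definition quartic k a b c d t := k * t ^ 4 + a * t ^ 3 + b * t ^ 2 + c * t + d.
Definition quartic_deriv k a b c t := 4 * k * t ^ 3 + 3 * a * t ^ 2 + 2 * b * t + c.

Lemma cubic_vieta k a b d r1 r2 r3 :
  r1 <> r2 -> r1 <> r3 -> r2 <> r3 ->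
  cubic k a b d r1 = 0 -> cubic k a b d r2 = 0 -> cubic k a b d r3 = 0 ->
  a = - k * (r1 + r2 + r3) /\ b = k * (r1 * r2 + r1 * r3 + r2 * r3).
Proof.
  unfold cubic; intros d12 d13 d23 h1 h2 h3.
  destruct (quadratic_eq0 (a + k * (r1 + r2 + r3)) (b - k * (r1 * r2 + r1 * r3 + r2 * r3))
              (d + k * (r1 * r2 * r3)) r1 r2 r3) as (Ea & Eb & _);
    [assumption .. | nra | nra | nra | split; lra].
Qed.

Lemma quartic_vieta k a b c d r1 r2 r3 r4 :
  r1 <> r2 -> r1 <> r3 -> r1 <> r4 -> r2 <> r3 -> r2 <> r4 -> r3 <> r4 ->
  quartic k a b c d r1 = 0 -> quartic k a b c d r2 = 0 ->
  quartic k a b c d r3 = 0 -> quartic k a b c d r4 = 0 ->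
  a = - k * (r1 + r2 + r3 + r4) /\
  b = k * (r1 * r2 + r1 * r3 + r1 * r4 + r2 * r3 + r2 * r4 + r3 * r4) /\
  c = - k * (r1 * r2 * r3 + r1 * r2 * r4 + r1 * r3 * r4 + r2 * r3 * r4).
Proof.
  unfold quartic; intros d12 d13 d14 d23 d24 d34 h1 h2 h3 h4.
  destruct (cubic_eq0 (a + k * (r1 + r2 + r3 + r4))
              (b - k * (r1 * r2 + r1 * r3 + r1 * r4 + r2 * r3 + r2 * r4 + r3 * r4))
              (c + k * (r1 * r2 * r3 + r1 * r2 * r4 + r1 * r3 * r4 + r2 * r3 * r4))
              (d - k * (r1 * r2 * r3 * r4)) r1 r2 r3 r4) as (Ea & Eb & Ec & _);
    [assumption .. | nra | nra | nra | nra | repeat split; lra].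
Qed.

Lemma cubic_roots_inv_deriv_sum k a b d r1 r2 r3 :
  k <> 0 -> r1 <> r2 -> r1 <> r3 -> r2 <> r3 ->
  cubic k a b d r1 = 0 -> cubic k a b d r2 = 0 -> cubic k a b d r3 = 0 ->
  / cubic_deriv k a b r1 + / cubic_deriv k a b r2 + / cubic_deriv k a b r3 = 0.
Proof.
  intros hk d12 d13 d23 h1 h2 h3.
  destruct (cubic_vieta _ _ _ _ _ _ _ d12 d13 d23 h1 h2 h3) as [-> ->].
  unfold cubic_deriv.
  replace (3 * k * r1 ^ 2 + _ * r1 + _) with (k * (r1 - r2) * (r1 - r3)) by ring.
  replace (3 * k * r2 ^ 2 + _ * r2 + _) with (k * (r2 - r1) * (r2 - r3)) by ring.
  replace (3 * k * r3 ^ 2 + _ * r3 + _) with (k * (r3 - r1) * (r3 - r2)) by ring.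
  field; repeat split; auto using Rminus_eq_contra.
Qed.

Lemma quartic_roots_linear_over_deriv_sum k a b c d al be r1 r2 r3 r4 :
  k <> 0 -> r1 <> r2 -> r1 <> r3 -> r1 <> r4 -> r2 <> r3 -> r2 <> r4 -> r3 <> r4 ->
  quartic k a b c d r1 = 0 -> quartic k a b c d r2 = 0 ->
  quartic k a b c d r3 = 0 -> quartic k a b c d r4 = 0 ->
  (al * r1 + be) / quartic_deriv k a b c r1 + (al * r2 + be) / quartic_deriv k a b c r2 +
  (al * r3 + be) / quartic_deriv k a b c r3 + (al * r4 + be) / quartic_deriv k a b c r4 = 0.
Proof.
  intros hk d12 d13 d14 d23 d24 d34 h1 h2 h3 h4.
  destruct (quartic_vieta _ _ _ _ _ _ _ _ _ d12 d13 d14 d23 d24 d34 h1 h2 h3 h4)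
    as (-> & -> & ->).
  unfold quartic_deriv.
  replace (4 * k * r1 ^ 3 + _ * r1 ^ 2 + _ * r1 + _)
    with (k * (r1 - r2) * (r1 - r3) * (r1 - r4)) by ring.
  replace (4 * k * r2 ^ 3 + _ * r2 ^ 2 + _ * r2 + _)
    with (k * (r2 - r1) * (r2 - r3) * (r2 - r4)) by ring.
  replace (4 * k * r3 ^ 3 + _ * r3 ^ 2 + _ * r3 + _)
    with (k * (r3 - r1) * (r3 - r2) * (r3 - r4)) by ring.
  replace (4 * k * r4 ^ 3 + _ * r4 ^ 2 + _ * r4 + _)
    with (k * (r4 - r1) * (r4 - r2) * (r4 - r3)) by ring.
  field; repeat split; auto using Rminus_eq_contra.
Qed.

Lemma quartic_roots_inv_deriv_sum k a b c d r1 r2 r3 r4 :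
  k <> 0 -> r1 <> r2 -> r1 <> r3 -> r1 <> r4 -> r2 <> r3 -> r2 <> r4 -> r3 <> r4 ->
  quartic k a b c d r1 = 0 -> quartic k a b c d r2 = 0 ->
  quartic k a b c d r3 = 0 -> quartic k a b c d r4 = 0 ->
  / quartic_deriv k a b c r1 + / quartic_deriv k a b c r2 +
  / quartic_deriv k a b c r3 + / quartic_deriv k a b c r4 = 0.
Proof.
  intros. rewrite <- (quartic_roots_linear_over_deriv_sum k a b c d 0 1 r1 r2 r3 r4) by assumption.
  unfold Rdiv; ring.
Qed.

Lemma magnification_sum_zero_of_jac (f : R2 -> R2) (Jf : R2 -> R) n :
  (forall x d, is_jac_det f x d -> d = Jf x) ->
  (forall s xs, length xs = n -> NoDup xs -> (forall x, In x xs -> f x = s /\ Jf x <> 0) ->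
     fold_right Rplus 0 (map (fun x => / Jf x) xs) = 0) ->
  magnification_sum_zero f n.
Proof.
  intros HJf Hsum J HJ s xs Hlen Hnd Hpre HJ0.
  assert (EJ : forall x, J x = Jf x) by (intro x; apply HJf, HJ).
  rewrite (map_ext _ (fun x => / Jf x)) by (intro x; now rewrite EJ).
  apply (Hsum s xs Hlen Hnd); intros x Hx.
  split; [now apply Hpre | rewrite <- EJ; now apply HJ0].
Qed.

Definition inverse_jacobians_cancel2 (f : R2 -> R2) (Jf : R2 -> R) : Prop :=
  forall s p1 p2, p1 <> p2 -> f p1 = s -> f p2 = s -> Jf p1 <> 0 -> Jf p2 <> 0 ->
  / Jf p1 + / Jf p2 = 0.

Definition inverse_jacobians_cancel3 (f : R2 -> R2) (Jf : R2 -> R) : Prop :=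
  forall s p1 p2 p3, p1 <> p2 -> p1 <> p3 -> p2 <> p3 ->
  f p1 = s -> f p2 = s -> f p3 = s -> Jf p1 <> 0 -> Jf p2 <> 0 -> Jf p3 <> 0 ->
  / Jf p1 + / Jf p2 + / Jf p3 = 0.

Definition inverse_jacobians_cancel4 (f : R2 -> R2) (Jf : R2 -> R) : Prop :=
  forall s p1 p2 p3 p4, p1 <> p2 -> p1 <> p3 -> p1 <> p4 -> p2 <> p3 -> p2 <> p4 -> p3 <> p4 ->
  f p1 = s -> f p2 = s -> f p3 = s -> f p4 = s ->
  Jf p1 <> 0 -> Jf p2 <> 0 -> Jf p3 <> 0 -> Jf p4 <> 0 ->
  / Jf p1 + / Jf p2 + / Jf p3 + / Jf p4 = 0.

Lemma magnification_sum_zero2 f Jf :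
  (forall x d, is_jac_det f x d -> d = Jf x) -> inverse_jacobians_cancel2 f Jf ->
  magnification_sum_zero f 2.
Proof.
  intros HJf Hcancel; apply (magnification_sum_zero_of_jac _ _ _ HJf).
  intros s [|p1 [|p2 [|]]] Hlen Hnd Hpre; try discriminate.
  apply NoDup_cons_iff in Hnd as [N1 _].
  transitivity (/ Jf p1 + / Jf p2); [simpl; ring|].
  apply (Hcancel s); first [apply Hpre | intros ->]; simpl in *; tauto.
Qed.

Lemma magnification_sum_zero3 f Jf :
  (forall x d, is_jac_det f x d -> d = Jf x) -> inverse_jacobians_cancel3 f Jf ->
  magnification_sum_zero f 3.
Proof.
  intros HJf Hcancel; apply (magnification_sum_zero_of_jac _ _ _ HJf).
  intros s [|p1 [|p2 [|p3 [|]]]] Hlen Hnd Hpre; try discriminate.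
  apply NoDup_cons_iff in Hnd as [N1 Hnd]; apply NoDup_cons_iff in Hnd as [N2 _].
  transitivity (/ Jf p1 + / Jf p2 + / Jf p3); [simpl; ring|].
  apply (Hcancel s); first [apply Hpre | intros ->]; simpl in *; tauto.
Qed.

Lemma magnification_sum_zero4 f Jf :
  (forall x d, is_jac_det f x d -> d = Jf x) -> inverse_jacobians_cancel4 f Jf ->
  magnification_sum_zero f 4.
Proof.
  intros HJf Hcancel; apply (magnification_sum_zero_of_jac _ _ _ HJf).
  intros s [|p1 [|p2 [|p3 [|p4 [|]]]]] Hlen Hnd Hpre; try discriminate.
  apply NoDup_cons_iff in Hnd as [N1 Hnd]; apply NoDup_cons_iff in Hnd as [N2 Hnd].
  apply NoDup_cons_iff in Hnd as [N3 _].
  transitivity (/ Jf p1 + / Jf p2 + / Jf p3 + / Jf p4); [simpl; ring|].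
  apply (Hcancel s); first [apply Hpre | intros ->]; simpl in *; tauto.
Qed.

Lemma jac_det_eq f x d a11 a12 a21 a22 :
  is_jac_det f x d ->
  is_derive (fun t => fst (f (t, snd x))) (fst x) a11 ->
  is_derive (fun t => fst (f (fst x, t))) (snd x) a12 ->
  is_derive (fun t => snd (f (t, snd x))) (fst x) a21 ->
  is_derive (fun t => snd (f (fst x, t))) (snd x) a22 ->
  d = a11 * a22 - a12 * a21.
Proof.
  intros (b11 & b12 & b21 & b22 & E11 & E12 & E21 & E22 & ->) D11 D12 D21 D22.
  apply is_derive_Reals in D11, D12, D21, D22.
  rewrite (uniqueness_limite _ _ _ _ E11 D11), (uniqueness_limite _ _ _ _ E12 D12),
    (uniqueness_limite _ _ _ _ E21 D21), (uniqueness_limite _ _ _ _ E22 D22).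
  reflexivity.
Qed.

Ltac jac_det_of H a11 a12 a21 a22 :=
  rewrite (jac_det_eq _ _ _ a11 a12 a21 a22 H);
  [ring | cbn [fst snd]; auto_derive; [exact I | ring] ..].

Definition fold_jac (x : R2) := 2 * snd x.
Definition cusp_jac (x : R2) := fst x + 3 * snd x ^ 2.
Definition swallowtail_jac c (x : R2) := snd x + 2 * c * fst x + 4 * fst x ^ 3.
Definition elliptic_umbilic_jac c (x : R2) := 4 * c ^ 2 - 36 * fst x ^ 2 - 36 * snd x ^ 2.
Definition hyperbolic_umbilic_jac c (x : R2) := 36 * fst x * snd x - c ^ 2.

Lemma fold_jac_det x d : is_jac_det fold_map x d -> d = fold_jac x.
Proof. unfold fold_map, fold_jac; intros H; jac_det_of H 1 0 0 (2 * snd x). Qed.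

Lemma cusp_jac_det x d : is_jac_det cusp_map x d -> d = cusp_jac x.
Proof.
  unfold cusp_map, cusp_jac; intros H.
  jac_det_of H 1 0 (snd x) (fst x + 3 * snd x ^ 2).
Qed.

Lemma swallowtail_jac_det c x d :
  is_jac_det (swallowtail_map c) x d -> d = swallowtail_jac c x.
Proof.
  unfold swallowtail_map, swallowtail_jac; intros H.
  jac_det_of H (snd x + 2 * c * fst x + 4 * fst x ^ 3) (fst x) 0 1.
Qed.

Lemma elliptic_umbilic_jac_det c x d :
  is_jac_det (elliptic_umbilic_map c) x d -> d = elliptic_umbilic_jac c x.
Proof.
  unfold elliptic_umbilic_map, elliptic_umbilic_jac; intros H.
  jac_det_of H (- 6 * fst x - 2 * c) (6 * snd x) (6 * snd x) (6 * fst x - 2 * c).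
Qed.

Lemma hyperbolic_umbilic_jac_det c x d :
  is_jac_det (hyperbolic_umbilic_map c) x d -> d = hyperbolic_umbilic_jac c x.
Proof.
  unfold hyperbolic_umbilic_map, hyperbolic_umbilic_jac; intros H.
  jac_det_of H (- 6 * fst x) (- c) (- c) (- 6 * snd x).
Qed.

Lemma neq_fst_of_graph (h : R -> R) (p q : R2) :
  snd p = h (fst p) -> snd q = h (fst q) -> p <> q -> fst p <> fst q.
Proof. destruct p, q; simpl; intros -> -> Hpq e; subst; auto. Qed.

Lemma neq_snd_of_graph (h : R -> R) (p q : R2) :
  fst p = h (snd p) -> fst q = h (snd q) -> p <> q -> snd p <> snd q.
Proof. destruct p, q; simpl; intros -> -> Hpq e; subst; auto. Qed.

Lemma pow2_eq x y : x ^ 2 = y ^ 2 -> x = y \/ x = - y.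
Proof. rewrite <- !Rsqr_pow2; apply Rsqr_eq. Qed.

Lemma pow2_eq_opp x y : x ^ 2 = y ^ 2 -> x <> y -> y = - x.
Proof. intros E Hxy; destruct (pow2_eq x y E); [contradiction | lra]. Qed.

Lemma sum_two_pairs (A B : R2 -> Prop) (g : R2 -> R) p1 p2 p3 p4 :
  p1 <> p2 -> p1 <> p3 -> p1 <> p4 -> p2 <> p3 -> p2 <> p4 -> p3 <> p4 ->
  (forall p q r, A p -> A q -> A r -> p <> q -> p <> r -> q <> r -> False) ->
  (forall p q r, B p -> B q -> B r -> p <> q -> p <> r -> q <> r -> False) ->
  A p1 \/ B p1 -> A p2 \/ B p2 -> A p3 \/ B p3 -> A p4 \/ B p4 ->
  (forall p q r t, p <> q -> r <> t -> A p -> A q -> B r -> B t ->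
     g p + g q + g r + g t = 0) ->
  g p1 + g p2 + g p3 + g p4 = 0.
Proof.
  intros d12 d13 d14 d23 d24 d34 A3 B3 C1 C2 C3 C4 Hpairs.
  destruct C1, C2, C3, C4;
  match goal with
  | h1 : A ?p, h2 : A ?q, h3 : A ?r |- _ => exfalso; apply (A3 p q r); auto
  | h1 : B ?p, h2 : B ?q, h3 : B ?r |- _ => exfalso; apply (B3 p q r); auto
  | h1 : A ?p, h2 : A ?q, h3 : B ?r, h4 : B ?t |- _ =>
      assert (g p + g q + g r + g t = 0) by (apply Hpairs; auto); lra
  end.
Qed.

Lemma no_three_same_fst_sq_snd (p q r : R2) :
  fst p = fst q -> fst p = fst r -> snd q ^ 2 = snd p ^ 2 -> snd r ^ 2 = snd p ^ 2 ->
  p <> q -> p <> r -> q <> r -> False.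
Proof.
  intros Fq Fr Sq Sr dpq dpr dqr.
  assert (Hsnd : forall x y, fst x = fst y -> x <> y -> snd x <> snd y)
    by (intros x y Fxy; apply (neq_snd_of_graph (fun _ => fst y)); auto).
  pose proof (pow2_eq_opp _ _ (eq_sym Sq) (Hsnd _ _ Fq dpq)).
  pose proof (pow2_eq_opp _ _ (eq_sym Sr) (Hsnd _ _ Fr dpr)).
  apply (Hsnd q r); congruence.
Qed.

Lemma fold_inverse_jacobians_cancel : inverse_jacobians_cancel2 fold_map fold_jac.
Proof.
  intros [s1 s2] [a1 b1] [a2 b2] d12 E1 E2 N1 _.
  unfold fold_map, fold_jac in *; cbn [fst snd] in *.
  apply pair_equal_spec in E1 as [-> E1]; apply pair_equal_spec in E2 as [-> E2].
  assert (b2 = - b1) as -> by (apply pow2_eq_opp; [congruence | intros ->; auto]).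
  field; lra.
Qed.

Lemma cusp_inverse_jacobians_cancel : inverse_jacobians_cancel3 cusp_map cusp_jac.
Proof.
  intros [s1 s2] p1 p2 p3 d12 d13 d23 E1 E2 E3 _ _ _.
  assert (preimage : forall x, cusp_map x = (s1, s2) ->
            fst x = s1 /\ cubic 1 0 s1 (- s2) (snd x) = 0 /\
            cusp_jac x = cubic_deriv 1 0 s1 (snd x)).
  { unfold cusp_map, cusp_jac, cubic, cubic_deriv.
    intros x E; apply pair_equal_spec in E as [Ex Ey].
    repeat split; [assumption | rewrite <- Ey, Ex | rewrite Ex]; ring. }
  destruct (preimage _ E1) as (F1 & Q1 & ->), (preimage _ E2) as (F2 & Q2 & ->),
    (preimage _ E3) as (F3 & Q3 & ->).
  apply (cubic_roots_inv_deriv_sum _ _ _ (- s2)); auto using R1_neq_R0;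
    apply (neq_snd_of_graph (fun _ => s1)); congruence.
Qed.

Lemma swallowtail_inverse_jacobians_cancel c :
  inverse_jacobians_cancel4 (swallowtail_map c) (swallowtail_jac c).
Proof.
  intros [s1 s2] p1 p2 p3 p4 d12 d13 d14 d23 d24 d34 E1 E2 E3 E4 _ _ _ _.
  assert (preimage : forall x, swallowtail_map c x = (s1, s2) ->
            snd x = s2 /\ quartic 1 0 c s2 (- s1) (fst x) = 0 /\
            swallowtail_jac c x = quartic_deriv 1 0 c s2 (fst x)).
  { unfold swallowtail_map, swallowtail_jac, quartic, quartic_deriv.
    intros x E; apply pair_equal_spec in E as [Ex Ey].
    repeat split; [assumption | rewrite <- Ex, Ey | rewrite Ey]; ring. }
  destruct (preimage _ E1) as (F1 & Q1 & ->), (preimage _ E2) as (F2 & Q2 & ->),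
    (preimage _ E3) as (F3 & Q3 & ->), (preimage _ E4) as (F4 & Q4 & ->).
  apply (quartic_roots_inv_deriv_sum _ _ _ _ (- s1)); auto using R1_neq_R0;
    apply (neq_fst_of_graph (fun _ => s2)); congruence.
Qed.

Lemma hyperbolic_umbilic_preimage c s1 s2 x :
  c <> 0 -> hyperbolic_umbilic_map c x = (s1, s2) ->
  snd x = (- 3 * fst x ^ 2 - s1) / c /\
  quartic 27 0 (18 * s1) (c ^ 3) (3 * s1 ^ 2 + c ^ 2 * s2) (fst x) = 0 /\
  quartic_deriv 27 0 (18 * s1) (c ^ 3) (fst x) = - c * hyperbolic_umbilic_jac c x.
Proof.
  unfold hyperbolic_umbilic_map, hyperbolic_umbilic_jac, quartic, quartic_deriv.
  intros hc E; apply pair_equal_spec in E as [<- <-].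
  repeat split; [field; exact hc | ring | ring].
Qed.

Lemma hyperbolic_umbilic0_inverse_jacobians_cancel :
  inverse_jacobians_cancel4 (hyperbolic_umbilic_map 0) (hyperbolic_umbilic_jac 0).
Proof.
  intros [s1 s2] p1 p2 p3 p4 d12 d13 d14 d23 d24 d34 E1 E2 E3 E4 _ _ _ _.
  assert (squares : forall x, hyperbolic_umbilic_map 0 x = (s1, s2) ->
            fst x ^ 2 = fst p1 ^ 2 /\ snd x ^ 2 = snd p1 ^ 2).
  { unfold hyperbolic_umbilic_map in E1 |- *; intros x E.
    apply pair_equal_spec in E as [Ex Ey]; apply pair_equal_spec in E1 as [Ex1 Ey1].
    split; lra. }
  assert (opposite : forall p q : R2, fst p = fst q -> snd q ^ 2 = snd p ^ 2 -> p <> q ->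
            / hyperbolic_umbilic_jac 0 p + / hyperbolic_umbilic_jac 0 q = 0).
  { intros [x y] [x' y'] Fpq Spq dpq; cbn [fst snd] in *; subst x'.
    assert (y' = - y) as -> by (apply pow2_eq_opp; [auto | intros ->; auto]).
    unfold hyperbolic_umbilic_jac; cbn [fst snd].
    replace (36 * x * - y - 0 ^ 2) with (- (36 * x * y - 0 ^ 2)) by ring.
    rewrite Rinv_opp; ring. }
  set (line (a : R) (p : R2) := fst p = a /\ snd p ^ 2 = snd p1 ^ 2).
  assert (no_three : forall a p q r, line a p -> line a q -> line a r ->
            p <> q -> p <> r -> q <> r -> False).
  { intros a p q r [Fp Sp] [Fq Sq] [Fr Sr].
    apply no_three_same_fst_sq_snd; congruence. }
  assert (classify : forall p, hyperbolic_umbilic_map 0 p = (s1, s2) ->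
            line (fst p1) p \/ line (- fst p1) p).
  { intros p Ep; destruct (squares p Ep) as [Sx Sy].
    destruct (pow2_eq _ _ Sx); [left | right]; split; assumption. }
  apply (sum_two_pairs (line (fst p1)) (line (- fst p1))
           (fun p => / hyperbolic_umbilic_jac 0 p));
    try first [assumption | apply no_three | now apply classify].
  intros p q r t dpq drt [Fp Sp] [Fq Sq] [Fr Sr] [Ft St].
  pose proof (opposite p q ltac:(congruence) ltac:(congruence) dpq).
  pose proof (opposite r t ltac:(congruence) ltac:(congruence) drt).
  lra.
Qed.

Lemma hyperbolic_umbilic_inverse_jacobians_cancel c :
  inverse_jacobians_cancel4 (hyperbolic_umbilic_map c) (hyperbolic_umbilic_jac c).
Proof.
  (* for c = 0 the first coordinate no longer determines the second *)
  destruct (Req_dec c 0) as [-> | hc]; [exact hyperbolic_umbilic0_inverse_jacobians_cancel|].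
  intros [s1 s2] p1 p2 p3 p4 d12 d13 d14 d23 d24 d34 E1 E2 E3 E4 N1 N2 N3 N4.
  set (Q' := quartic_deriv 27 0 (18 * s1) (c ^ 3)).
  assert (inv : forall x, hyperbolic_umbilic_jac c x <> 0 ->
            Q' (fst x) = - c * hyperbolic_umbilic_jac c x ->
            / hyperbolic_umbilic_jac c x = - c * / Q' (fst x)).
  { intros x N ->; field; auto. }
  destruct (hyperbolic_umbilic_preimage _ _ _ _ hc E1) as (F1 & Q1 & D1),
    (hyperbolic_umbilic_preimage _ _ _ _ hc E2) as (F2 & Q2 & D2),
    (hyperbolic_umbilic_preimage _ _ _ _ hc E3) as (F3 & Q3 & D3),
    (hyperbolic_umbilic_preimage _ _ _ _ hc E4) as (F4 & Q4 & D4).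
  rewrite (inv _ N1 D1), (inv _ N2 D2), (inv _ N3 D3), (inv _ N4 D4).
  transitivity (- c * (/ Q' (fst p1) + / Q' (fst p2) + / Q' (fst p3) + / Q' (fst p4)));
    [ring|].
  rewrite (quartic_roots_inv_deriv_sum 27 0 (18 * s1) (c ^ 3) (3 * s1 ^ 2 + c ^ 2 * s2));
    [ring | lra | first [assumption |
      apply (neq_fst_of_graph (fun t => (- 3 * t ^ 2 - s1) / c)); assumption] ..].
Qed.

Lemma elliptic_umbilic_preimage c s1 s2 x :
  s2 <> 0 -> elliptic_umbilic_map c x = (s1, s2) ->
  3 * fst x - c <> 0 /\ snd x = s2 / (6 * fst x - 2 * c) /\
  quartic 108 0 (36 * s1 - 36 * c ^ 2) (8 * c ^ 3 - 24 * c * s1) (4 * c ^ 2 * s1 - 3 * s2 ^ 2)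
    (fst x) = 0 /\
  quartic_deriv 108 0 (36 * s1 - 36 * c ^ 2) (8 * c ^ 3 - 24 * c * s1) (fst x) =
    - 2 * (3 * fst x - c) * elliptic_umbilic_jac c x.
Proof.
  unfold elliptic_umbilic_map, elliptic_umbilic_jac, quartic, quartic_deriv.
  intros hs E; apply pair_equal_spec in E as [<- <-].
  assert (hx : 3 * fst x - c <> 0) by (intro e; apply hs; nra).
  repeat split; [exact hx | field | ring | ring]; lra.
Qed.

Lemma elliptic_umbilic_axis_fiber_cases c s1 x :
  elliptic_umbilic_map c x = (s1, 0) ->
  (snd x = 0 /\ 3 * fst x ^ 2 + 2 * c * fst x + s1 = 0) \/
  (fst x = c / 3 /\ snd x ^ 2 = (s1 + c ^ 2) / 3).
Proof.
  unfold elliptic_umbilic_map; intros E; apply pair_equal_spec in E as [Ex Ey].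
  assert (H : snd x * (3 * fst x - c) = 0) by lra.
  destruct (Rmult_integral _ _ H) as [Hy | Hx]; [left | right]; split; try lra.
  - rewrite <- Ex, Hy; ring.
  - rewrite <- Ex; replace (fst x) with (c / 3) by lra; field.
Qed.

Lemma elliptic_umbilic_two_pairs c s1 a1 a2 b1 b2 :
  a1 <> a2 -> b1 <> b2 ->
  3 * a1 ^ 2 + 2 * c * a1 + s1 = 0 -> 3 * a2 ^ 2 + 2 * c * a2 + s1 = 0 ->
  b1 ^ 2 = (s1 + c ^ 2) / 3 -> b2 ^ 2 = (s1 + c ^ 2) / 3 ->
  elliptic_umbilic_jac c (a1, 0) <> 0 -> elliptic_umbilic_jac c (a2, 0) <> 0 ->
  elliptic_umbilic_jac c (c / 3, b1) <> 0 ->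
  / elliptic_umbilic_jac c (a1, 0) + / elliptic_umbilic_jac c (a2, 0) +
  / elliptic_umbilic_jac c (c / 3, b1) + / elliptic_umbilic_jac c (c / 3, b2) = 0.
Proof.
  unfold elliptic_umbilic_jac; cbn [fst snd].
  intros d12 d34 h1 h2 h3 h4 N1 N2 N3.
  assert (sum_roots : 3 * (a1 + a2) + 2 * c = 0).
  { apply (Rmult_eq0_reg_l (a2 - a1)); [apply Rminus_eq_contra; auto | nra]. }
  assert (a2 = - 2 * c / 3 - a1) as -> by lra.
  assert (b2 = - b1) as -> by (apply pow2_eq_opp; [lra | auto]).
  assert (s1 = - 3 * a1 ^ 2 - 2 * c * a1) as -> by lra.
  replace (4 * c ^ 2 - 36 * a1 ^ 2 - 36 * 0 ^ 2)
    with (4 * (c - 3 * a1) * (c + 3 * a1)) in * by ring.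
  replace (4 * c ^ 2 - 36 * (- 2 * c / 3 - a1) ^ 2 - 36 * 0 ^ 2)
    with (- 12 * (c + a1) * (c + 3 * a1)) in * by field.
  replace (4 * c ^ 2 - 36 * (c / 3) ^ 2 - 36 * (- b1) ^ 2)
    with (- 12 * (c - 3 * a1) * (c + a1)) by (field_simplify; nra).
  replace (4 * c ^ 2 - 36 * (c / 3) ^ 2 - 36 * b1 ^ 2)
    with (- 12 * (c - 3 * a1) * (c + a1)) in * by (field_simplify; nra).
  field; repeat split; intro e; [apply N2 | apply N1 | apply N1]; rewrite e; ring.
Qed.

Lemma elliptic_umbilic_axis_fiber_sum c s1 p1 p2 p3 p4 :
  p1 <> p2 -> p1 <> p3 -> p1 <> p4 -> p2 <> p3 -> p2 <> p4 -> p3 <> p4 ->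
  elliptic_umbilic_map c p1 = (s1, 0) -> elliptic_umbilic_map c p2 = (s1, 0) ->
  elliptic_umbilic_map c p3 = (s1, 0) -> elliptic_umbilic_map c p4 = (s1, 0) ->
  elliptic_umbilic_jac c p1 <> 0 -> elliptic_umbilic_jac c p2 <> 0 ->
  elliptic_umbilic_jac c p3 <> 0 -> elliptic_umbilic_jac c p4 <> 0 ->
  / elliptic_umbilic_jac c p1 + / elliptic_umbilic_jac c p2 +
  / elliptic_umbilic_jac c p3 + / elliptic_umbilic_jac c p4 = 0.
Proof.
  intros d12 d13 d14 d23 d24 d34 E1 E2 E3 E4 N1 N2 N3 N4.
  set (axis (p : R2) := (snd p = 0 /\ 3 * fst p ^ 2 + 2 * c * fst p + s1 = 0) /\
                        elliptic_umbilic_jac c p <> 0).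
  set (vertical (p : R2) := (fst p = c / 3 /\ snd p ^ 2 = (s1 + c ^ 2) / 3) /\
                            elliptic_umbilic_jac c p <> 0).
  assert (classify : forall p, elliptic_umbilic_map c p = (s1, 0) ->
            elliptic_umbilic_jac c p <> 0 -> axis p \/ vertical p).
  { intros p Ep Np; destruct (elliptic_umbilic_axis_fiber_cases _ _ _ Ep);
      [left | right]; split; assumption. }
  apply (sum_two_pairs axis vertical (fun p => / elliptic_umbilic_jac c p));
    try first [assumption | now apply classify].
  - intros p q r [[Hp Qp] _] [[Hq Qq] _] [[Hr Qr] _] dpq dpr dqr.
    assert (Hfst : forall x y, snd x = 0 -> snd y = 0 -> x <> y -> fst x <> fst y)
      by (intros x y; apply (neq_fst_of_graph (fun _ => 0))).
    destruct (quadratic_eq0 3 (2 * c) s1 (fst p) (fst q) (fst r)) as [H3 _];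
      auto; lra.
  - intros p q r [[Fp Sp] _] [[Fq Sq] _] [[Fr Sr] _].
    apply no_three_same_fst_sq_snd; congruence.
  - intros [a1 y1] [a2 y2] [x3 b1] [x4 b2] dpq drt
      [[Hy1 Q1] J1] [[Hy2 Q2] J2] [[Hx3 S3] J3] [[Hx4 S4] J4]; cbn [fst snd] in *.
    subst y1 y2 x3 x4.
    apply elliptic_umbilic_two_pairs with s1; auto; congruence.
Qed.

Lemma elliptic_umbilic_inverse_jacobians_cancel c :
  inverse_jacobians_cancel4 (elliptic_umbilic_map c) (elliptic_umbilic_jac c).
Proof.
  intros [s1 s2] p1 p2 p3 p4 d12 d13 d14 d23 d24 d34 E1 E2 E3 E4 N1 N2 N3 N4.
  (* over the axis s2 = 0 the first coordinate no longer determines the second *)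
  destruct (Req_dec s2 0) as [-> | hs]; [now apply (elliptic_umbilic_axis_fiber_sum c s1)|].
  set (Q' := quartic_deriv 108 0 (36 * s1 - 36 * c ^ 2) (8 * c ^ 3 - 24 * c * s1)).
  assert (inv : forall x, elliptic_umbilic_jac c x <> 0 -> 3 * fst x - c <> 0 ->
            Q' (fst x) = - 2 * (3 * fst x - c) * elliptic_umbilic_jac c x ->
            / elliptic_umbilic_jac c x = (- 6 * fst x + 2 * c) / Q' (fst x)).
  { intros x N hx ->; field; auto. }
  destruct (elliptic_umbilic_preimage _ _ _ _ hs E1) as (H1 & F1 & Q1 & D1),
    (elliptic_umbilic_preimage _ _ _ _ hs E2) as (H2 & F2 & Q2 & D2),
    (elliptic_umbilic_preimage _ _ _ _ hs E3) as (H3 & F3 & Q3 & D3),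
    (elliptic_umbilic_preimage _ _ _ _ hs E4) as (H4 & F4 & Q4 & D4).
  rewrite (inv _ N1 H1 D1), (inv _ N2 H2 D2), (inv _ N3 H3 D3), (inv _ N4 H4 D4).
  apply (quartic_roots_linear_over_deriv_sum _ _ _ _ (4 * c ^ 2 * s1 - 3 * s2 ^ 2));
    first [lra | assumption |
      apply (neq_fst_of_graph (fun t => s2 / (6 * t - 2 * c))); assumption].
Qed.

Theorem theorem8p2 :
  magnification_sum_zero fold_map 2 /\
  magnification_sum_zero cusp_map 3 /\
  (forall c : R, magnification_sum_zero (swallowtail_map c) 4) /\
  (forall c : R, magnification_sum_zero (elliptic_umbilic_map c) 4) /\
  (forall c : R, magnification_sum_zero (hyperbolic_umbilic_map c) 4).
Proof.
  split; [exact (magnification_sum_zero2 _ _ fold_jac_det fold_inverse_jacobians_cancel)|].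
  split; [exact (magnification_sum_zero3 _ _ cusp_jac_det cusp_inverse_jacobians_cancel)|].
  split; [intro c; exact (magnification_sum_zero4 _ _ (swallowtail_jac_det c)
                             (swallowtail_inverse_jacobians_cancel c))|].
  split; intro c.
  - exact (magnification_sum_zero4 _ _ (elliptic_umbilic_jac_det c)
             (elliptic_umbilic_inverse_jacobians_cancel c)).
  - exact (magnification_sum_zero4 _ _ (hyperbolic_umbilic_jac_det c)
             (hyperbolic_umbilic_inverse_jacobians_cancel c)).
Qed.
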